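(* Every weakly Rayleigh set-system $\mathcal{Q}\subseteq 2^E$ ($E$ finite) is convex.
   Context: For $\omega:2^E\to[0,\infty)$ not identically zero, $Z(\omega;\mathbf{y})=\sum_S\omega(S)\prod_{e\in S}y_e$; with subscripts denoting partial derivatives, $Z$ is Rayleigh if $Z_eZ_f-Z_{ef}Z\ge0$ for all distinct $e,f$ and all positive $\mathbf{y}$. $\mathcal{Q}$ is weakly Rayleigh if some $\omega\ge0$ with $\{S:\omega(S)>0\}=\mathcal{Q}$ has $Z(\omega;\mathbf{y})$ Rayleigh. $\mathcal{Q}$ is convex if $S\subseteq T\subseteq S'$ with $S,S'\in\mathcal{Q}$ implies $T\in\mathcal{Q}$. *)

From HB Require Import structures.
From mathcomp Require Import all_boot all_order all_algebra.
From mathcomp Require Import multinomials.mpoly.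
Set Implicit Arguments. Unset Strict Implicit. Unset Printing Implicit Defensive.
Import Order.TTheory GRing.Theory Num.Theory.
Local Open Scope ring_scope.

(* Ground set E = 'I_n (any finite set, up to relabelling). *)

Definition Zpoly (R : realFieldType) (n : nat) (omega : {set 'I_n} -> R)
  : {mpoly R[n]} :=
  \sum_(S : {set 'I_n}) omega S *: \prod_(e in S) 'X_e.

Definition rayleigh (R : realFieldType) (n : nat) (Z : {mpoly R[n]}) : Prop :=
  forall (e f : 'I_n), e != f ->
  forall y : 'I_n -> R, (forall i, 0 < y i) ->
    0 <= (Z^`M(e)).@[y] * (Z^`M(f)).@[y] - ((Z^`M(e))^`M(f)).@[y] * Z.@[y].

Definition weakly_rayleigh (R : realFieldType) (n : nat) (Q : {set {set 'I_n}}) : Prop :=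
  exists omega : {set 'I_n} -> R,
    (forall S, 0 <= omega S) /\ (exists S, omega S != 0) /\
    (forall S, (0 < omega S) <-> S \in Q) /\
    rayleigh (Zpoly omega).

Definition convex_system (n : nat) (Q : {set {set 'I_n}}) : Prop :=
  forall S T S' : {set 'I_n}, S \in Q -> S' \in Q -> S \subset T -> T \subset S' ->
    T \in Q.

From mathcomp Require Import all_boot all_order all_algebra.
From mathcomp Require Import multinomials.mpoly.
From mathcomp Require Import ring.
From mathcomp Require Import reals.
Set Implicit Arguments. Unset Strict Implicit. Unset Printing Implicit Defensive.
Import Order.TTheory GRing.Theory Num.Theory.
Local Open Scope ring_scope.

(* Convexity follows, by induction on |S' \ S|, from an exchange property of the
   support: if S ⊆ S' lie in it and e, f ∈ S' \ S are distinct, then so does some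
   U with S ⊆ U ⊆ S', e ∈ U and f ∉ U.  To get it, evaluate Z at the point equal to
   M on S, to 1 on S' \ S and to 1/M off S'.  Splitting Z as Z_11 + Z_10 + Z_01 + Z_00
   according to which of e, f a set contains, the Rayleigh difference for e, f is
   Z_10 Z_01 - Z_11 Z_00.  The terms of S' and S give Z_11 Z_00 >= w(S) w(S') M^(2|S|),
   whereas without such a U every set counted in Z_10 leaves the interval [S, S'],
   so its monomial is at most M^(|S|-1) and Z_10 Z_01 <= W^2 M^(2|S|-1), W = Σ w.
   Taking M > W^2 / (w(S) w(S')) contradicts the Rayleigh inequality. *)

Section ProductsOfVariables.
Variables (R : comNzRingType) (n : nat).
Implicit Types (i j : 'I_n) (S : {set 'I_n}) (v : 'I_n -> R).

Lemma mderivXU i j : ('X_j : {mpoly R[n]})^`M(i) = (j == i)%:R.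
Proof.
rewrite mderivX mnm1E; have [->|_] := eqVneq j i; last by rewrite scale0r.
rewrite (_ : (U_(i) - U_(i))%MM = 0%MM) ?mpolyX0 ?scale1r //.
by apply/mnmP => k; rewrite mnmBE subnn mnm0E.
Qed.

Lemma mderiv_prodX i S :
  (\prod_(j in S) 'X_j : {mpoly R[n]})^`M(i) =
  if i \in S then \prod_(j in S :\ i) 'X_j else 0.
Proof.
have deriv_notin T : i \notin T -> (\prod_(j in T) 'X_j : {mpoly R[n]})^`M(i) = 0.
  move=> iNT; elim/big_ind: _ => [|p q dp dq|j jT]; first by rewrite -mpolyC1 mderivC.
    by rewrite mderivM dp dq mul0r mulr0 addr0.
  by rewrite mderivXU; case: eqP jT iNT => // ->->.
case: ifPn => [iS|]; last exact: deriv_notin.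
rewrite (big_setD1 i iS) /= mderivM mderivXU eqxx mul1r deriv_notin ?mulr0 ?addr0 //.
by rewrite !inE eqxx.
Qed.

Lemma mderiv_sum_prodX (I : finType) (P : pred I) (c : I -> R)
    (F : I -> {set 'I_n}) i :
  (\sum_(k | P k) c k *: \prod_(j in F k) 'X_j : {mpoly R[n]})^`M(i) =
  \sum_(k | P k && (i \in F k)) c k *: \prod_(j in F k :\ i) 'X_j.
Proof.
rewrite raddf_sum big_mkcondr /=; apply: eq_bigr => k _.
by rewrite mderivZ mderiv_prodX; case: ifP; rewrite ?scaler0.
Qed.

Lemma meval_sum_prodX (I : finType) (P : pred I) (c : I -> R)
    (F : I -> {set 'I_n}) v :
  (\sum_(k | P k) c k *: \prod_(j in F k) 'X_j : {mpoly R[n]}).@[v] =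
  \sum_(k | P k) c k * \prod_(j in F k) v j.
Proof.
rewrite raddf_sum; apply: eq_bigr => k _.
by rewrite /= mevalZ rmorph_prod; congr (_ * _); apply: eq_bigr => j _; exact: mevalXU.
Qed.

End ProductsOfVariables.

Lemma prod_setD1_eq1 (R : comNzRingType) (T : finType) (v : T -> R) (S : {set T}) i :
  i \in S -> v i = 1 -> \prod_(j in S :\ i) v j = \prod_(j in S) v j.
Proof. by move=> iS vi; rewrite [RHS](big_setD1 i iS) /= vi mul1r. Qed.

Lemma sum_split2_cross (R : comNzRingType) (T : finType) (p q : pred T) (a : T -> R) :
  (\sum_(x | p x) a x) * (\sum_(x | q x) a x) - (\sum_(x | p x && q x) a x) * \sum_x a x =
  (\sum_(x | p x && ~~ q x) a x) * (\sum_(x | ~~ p x && q x) a x)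
  - (\sum_(x | p x && q x) a x) * (\sum_(x | ~~ p x && ~~ q x) a x).
Proof.
rewrite [\sum_(x | p x) _](bigID q) [\sum_(x | q x) _](bigID p) [\sum_x _](bigID p) /=.
rewrite [\sum_(x | p x) _](bigID q) [\sum_(x | ~~ p x) _](bigID q) /=.
under [\sum_(x | q x && p x) _]eq_bigl do rewrite andbC.
under [\sum_(x | q x && ~~ p x) _]eq_bigl do rewrite andbC.
ring.
Qed.

Definition Zterm (R : realFieldType) (n : nat) (w : {set 'I_n} -> R) (v : 'I_n -> R)
  (S : {set 'I_n}) : R := w S * \prod_(j in S) v j.

Lemma rayleigh_diff_at_unit (R : realFieldType) (n : nat) (w : {set 'I_n} -> R)
    (v : 'I_n -> R) (e f : 'I_n) :
  e != f -> v e = 1 -> v f = 1 ->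
  ((Zpoly w)^`M(e)).@[v] * ((Zpoly w)^`M(f)).@[v]
  - (((Zpoly w)^`M(e))^`M(f)).@[v] * (Zpoly w).@[v] =
  (\sum_(S : {set 'I_n} | (e \in S) && (f \notin S)) Zterm w v S)
    * (\sum_(S : {set 'I_n} | (e \notin S) && (f \in S)) Zterm w v S)
  - (\sum_(S : {set 'I_n} | (e \in S) && (f \in S)) Zterm w v S)
    * (\sum_(S : {set 'I_n} | (e \notin S) && (f \notin S)) Zterm w v S).
Proof.
move=> ef ve vf; rewrite -sum_split2_cross /Zpoly !mderiv_sum_prodX !meval_sum_prodX.
have drop1 i : v i = 1 ->
    \sum_(S : {set 'I_n} | true && (i \in S)) w S * \prod_(j in S :\ i) v j =
    \sum_(S : {set 'I_n} | i \in S) Zterm w v S.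
  by move=> vi; apply: eq_big => // S /= iS; rewrite prod_setD1_eq1.
rewrite !drop1 //; congr (_ - _ * _).
apply: eq_big => [S|S /andP[/= eS]]; first by rewrite in_setD1 /= (eq_sym f) ef.
rewrite in_setD1 => /andP[_ fS].
by rewrite prod_setD1_eq1 ?prod_setD1_eq1 // in_setD1 (eq_sym f) ef.
Qed.

Lemma prod_if_in (R : comNzRingType) (T : finType) (A U : {set T}) (x : R) :
  \prod_(j in U) (if j \in A then x else 1) = x ^+ #|U :&: A|.
Proof. by rewrite -big_mkcondr -prodr_const; apply: eq_bigl => j; rewrite inE. Qed.

Section TestPoint.
Variables (R : realFieldType) (n : nat) (Sa Sb : {set 'I_n}) (M : R).
Hypotheses (sub_ab : Sa \subset Sb) (M_ge1 : 1 <= M).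
Implicit Types (j : 'I_n) (U : {set 'I_n}).

Definition test_point j : R :=
  if j \in Sa then M else if j \in Sb then 1 else M^-1.

Let M_gt0 : 0 < M. Proof. exact: lt_le_trans ltr01 M_ge1. Qed.

Lemma test_point_gt0 j : 0 < test_point j.
Proof. by rewrite /test_point; case: ifP => // _; case: ifP; rewrite ?invr_gt0. Qed.

Lemma test_point_setD j : j \in Sb :\: Sa -> test_point j = 1.
Proof. by rewrite inE /test_point => /andP[/negbTE -> ->]. Qed.

Lemma prod_test_point_le U : \prod_(j in U) test_point j <= M ^+ #|U :&: Sa|.
Proof.
rewrite -prod_if_in; apply: ler_prod => j _; rewrite ltW ?test_point_gt0 //= /test_point.
by case: ifP => // _; case: ifP => // _; rewrite invf_le1.
Qed.

Lemma prod_test_point_max U : \prod_(j in U) test_point j <= M ^+ #|Sa|.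
Proof.
apply: le_trans (prod_test_point_le U) _.
by rewrite ler_weXn2l // subset_leq_card // subsetIr.
Qed.

Lemma prod_test_point_interval U :
  Sa \subset U -> U \subset Sb -> \prod_(j in U) test_point j = M ^+ #|Sa|.
Proof.
move=> sub_aU sub_Ub; rewrite -(setIidPr sub_aU) -prod_if_in.
by apply: eq_bigr => j /(subsetP sub_Ub) jSb; rewrite /test_point jSb; case: ifP.
Qed.

Lemma prod_test_point_outside U :
  ~~ ((Sa \subset U) && (U \subset Sb)) ->
  \prod_(j in U) test_point j <= M ^+ #|Sa| / M.
Proof.
rewrite negb_and => /orP[not_aU | /subsetPn[j jU jNb]].
  apply: le_trans (prod_test_point_le U) _; rewrite ler_pdivlMr // -exprSr.
  rewrite ler_weXn2l // proper_card // properE subsetIr.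
  by apply: contra not_aU => /subset_trans; apply; rewrite subsetIl.
have jNa : j \notin Sa by apply: contra jNb; apply: subsetP.
have tpj : test_point j = M^-1 by rewrite /test_point (negbTE jNa) (negbTE jNb).
rewrite (big_setD1 j jU) /= tpj mulrC.
by apply: ler_wpM2r; [rewrite invr_ge0 ltW | exact: prod_test_point_max].
Qed.

End TestPoint.

Section RayleighExchange.
Variables (R : realFieldType) (n : nat) (w : {set 'I_n} -> R).
Hypotheses (w_ge0 : forall S, 0 <= w S) (rayleigh_w : rayleigh (Zpoly w)).

Lemma rayleigh_support_exchange (Sa Sb : {set 'I_n}) (e f : 'I_n) :
  0 < w Sa -> 0 < w Sb -> Sa \subset Sb ->
  e \in Sb :\: Sa -> f \in Sb :\: Sa -> e != f ->
  exists U, [/\ 0 < w U, Sa \subset U, U \subset Sb, e \in U & f \notin U].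
Proof.
move=> wa_gt0 wb_gt0 sub_ab eD fD ef.
have [U /and5P[*]|none] :=
  pickP [pred U | [&& 0 < w U, Sa \subset U, U \subset Sb, e \in U & f \notin U]].
  by exists U.
exfalso.
set W := \sum_S w S; set c := w Sa * w Sb.
have c_gt0 : 0 < c by rewrite mulr_gt0.
pose M := W ^+ 2 / c + 1.
have M_ge1 : 1 <= M by rewrite lerDr divr_ge0 ?sqr_ge0 ?ltW.
have M_gt0 : 0 < M by apply: lt_le_trans ltr01 M_ge1.
pose y := test_point Sa Sb M; set B := M ^+ #|Sa|.
have B_gt0 : 0 < B by rewrite exprn_gt0.
have Zterm_ge0 S : 0 <= Zterm w y S.
  by rewrite mulr_ge0 // prodr_ge0 // => j _; rewrite ltW ?test_point_gt0.
have := rayleigh_w ef (test_point_gt0 Sa Sb M_ge1).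
rewrite rayleigh_diff_at_unit ?test_point_setD // subr_ge0.
set h10 := \sum_(S : {set 'I_n} | (e \in S) && (f \notin S)) Zterm w y S.
set h01 := \sum_(S : {set 'I_n} | (e \notin S) && (f \in S)) Zterm w y S.
set h11 := \sum_(S : {set 'I_n} | (e \in S) && (f \in S)) Zterm w y S.
set h00 := \sum_(S : {set 'I_n} | (e \notin S) && (f \notin S)) Zterm w y S.
have h10_le : h10 <= W * (B / M).
  rewrite /h10 big_mkcond /W mulr_suml; apply: ler_sum => S _.
  case: ifP => [/andP[eS fNS]|_]; last by rewrite mulr_ge0 // divr_ge0 // ltW.
  have [inI | outI] := boolP ((Sa \subset S) && (S \subset Sb)).
    have wS0 : w S = 0.
      apply/eqP; rewrite eq_le w_ge0 andbT leNgt.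
      by move: (none S); rewrite /= eS fNS !andbT inI andbT => ->.
    by rewrite /Zterm wS0 !mul0r.
  by apply: ler_wpM2l; rewrite // prod_test_point_outside.
have h01_le : h01 <= W * B.
  rewrite /h01 big_mkcond /W mulr_suml; apply: ler_sum => S _.
  case: ifP => _; last by rewrite mulr_ge0 // ltW.
  by apply: ler_wpM2l; rewrite // prod_test_point_max.
have h11_ge : w Sb * B <= h11.
  move: eD fD; rewrite !inE => /andP[_ eSb] /andP[_ fSb].
  rewrite /h11 (bigD1 Sb) /=; last by rewrite eSb fSb.
  by rewrite {1}/Zterm prod_test_point_interval // lerDl sumr_ge0.
have h00_ge : w Sa * B <= h00.
  move: eD fD; rewrite !inE => /andP[eNSa _] /andP[fNSa _].
  rewrite /h00 (bigD1 Sa) /=; last by rewrite eNSa fNSa.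
  by rewrite {1}/Zterm prod_test_point_interval // lerDl sumr_ge0.
have hge0 (p : pred {set 'I_n}) : 0 <= \sum_(S | p S) Zterm w y S by exact: sumr_ge0.
move=> cross_ineq.
have lower : c * B ^+ 2 <= h11 * h00.
  rewrite (_ : c * B ^+ 2 = (w Sb * B) * (w Sa * B)); last by rewrite /c; ring.
  by apply: ler_pM; rewrite // mulr_ge0 // ltW.
have upper : h10 * h01 <= W ^+ 2 * B ^+ 2 / M.
  rewrite (_ : W ^+ 2 * B ^+ 2 / M = (W * (B / M)) * (W * B)); last by ring.
  exact: ler_pM (hge0 _) (hge0 _) h10_le h01_le.
have := le_trans lower (le_trans cross_ineq upper).
rewrite ler_pdivlMr // (_ : c * B ^+ 2 * M = (W ^+ 2 + c) * B ^+ 2).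
  by rewrite ler_pM2r ?exprn_gt0 // gerDl leNgt c_gt0.
by rewrite /M; field; exact: lt0r_neq0.
Qed.

End RayleighExchange.

Section ConvexOfExchange.
Variables (T : finType) (Q : {set {set T}}).
Hypothesis exchange : forall (Sa Sb : {set T}) (e f : T),
  Sa \in Q -> Sb \in Q -> Sa \subset Sb ->
  e \in Sb :\: Sa -> f \in Sb :\: Sa -> e != f ->
  exists U, [/\ U \in Q, Sa \subset U, U \subset Sb, e \in U & f \notin U].

Lemma convex_of_exchange (Sa S Sb : {set T}) :
  Sa \in Q -> Sb \in Q -> Sa \subset S -> S \subset Sb -> S \in Q.
Proof.
have [N] := ubnP #|Sb :\: Sa|; elim: N => // N IH in Sa S Sb *.
move=> gap QSa QSb sub_aS sub_Sb.
have [-> //|neq_Sa] := eqVneq S Sa; have [-> //|neq_Sb] := eqVneq S Sb.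
have /subsetPn[e eS eNa] : ~~ (S \subset Sa) by rewrite eqEsubset sub_aS andbT in neq_Sa.
have /subsetPn[f fb fNS] : ~~ (Sb \subset S) by rewrite eqEsubset sub_Sb in neq_Sb.
have eD : e \in Sb :\: Sa by rewrite inE eNa (subsetP sub_Sb).
have fD : f \in Sb :\: Sa by rewrite inE fb andbT; apply: contra fNS; apply: subsetP.
have ef : e != f by apply: contraNneq fNS => <-.
have [U [QU sub_aU sub_Ub eU fNU]] :=
  exchange QSa QSb (subset_trans sub_aS sub_Sb) eD fD ef.
have shrink (D : {set T}) : D \proper Sb :\: Sa -> (#|D| < N)%N.
  by move=> ltD; rewrite ltnS in gap; exact: leq_trans (proper_card ltD) gap.
have Q_eSa : e |: Sa \in Q.
  apply: (IH Sa _ U) => //; [|exact: subsetUr|by rewrite subUset sub1set eU].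
  apply/shrink/properP; split; [exact: setSD | exists f => //].
  by rewrite !inE (negbTE fNU) andbF.
apply: (IH (e |: Sa) S Sb) => //; last by rewrite subUset sub1set eS.
apply/shrink/properP; split; [exact/setDS/subsetUr | exists e => //].
by rewrite !inE eqxx.
Qed.
End ConvexOfExchange.

Theorem corollary4p3 (R : realType) (n : nat) (Q : {set {set 'I_n}}) :
  weakly_rayleigh R Q -> convex_system Q.
Proof.
move=> [w [w_ge0 [_ [suppQ rayleigh_w]]]] S T S'.
apply: convex_of_exchange => Sa Sb e f QSa QSb sub_ab eD fD ef.
have [U [wU_gt0 sub_aU sub_Ub eU fNU]] := rayleigh_support_exchange w_ge0
  rayleigh_w ((suppQ Sa).2 QSa) ((suppQ Sb).2 QSb) sub_ab eD fD ef.
by exists U; split => //; apply/suppQ.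
Qed.
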